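(* Let $\tau\in\mathbb N$ and let $f:\mathbb Z_+\times\mathbb R\to\mathbb R$, continuous in $x$, satisfy: (1) $f$ is asymptotically $\tau$-periodic in $t$ uniformly with respect to $x$ on compact subsets of $\mathbb R$; (2) every $g\in H^+(f)$ is strictly increasing in $x$: $v_1<v_2$ implies $g(t,v_1)<g(t,v_2)$ for all $t\in\mathbb Z_+$; (3) the solution $\varphi(t,u_0,f)$ of $x(t+1)=f(t,x(t))$, $x(0)=u_0$, is bounded on $\mathbb Z_+$. Then $\lim_{t\to+\infty}|\varphi(t+\tau,u_0,f)-\varphi(t,u_0,f)|=0$.
   Context: $C(\mathbb Z_+\times\mathbb R,\mathbb R)$ is the space of functions continuous in $x$, with the topology of uniform convergence on sets $\{t:|t|\le L\}\times K$, $K$ compact. $f^h(t,x)=f(t+h,x)$; $H^+(f)$ is the closure of $\{f^h:h\in\mathbb Z_+\}$. $f$ is asymptotically $\tau$-periodic: $f=P+R$ with $P(t+\tau,x)=P(t,x)$ and $R(t,x)\to0$ as $t\to\infty$ uniformly on compact $x$-sets. *)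

From HB Require Import structures.
From mathcomp Require Import all_boot all_order all_algebra.
From mathcomp Require Import all_classical all_reals all_analysis.
Set Implicit Arguments. Unset Strict Implicit. Unset Printing Implicit Defensive.
Import Order.TTheory GRing.Theory Num.Theory.
Import numFieldNormedType.Exports.
Local Open Scope classical_set_scope.
Local Open Scope ring_scope.

(* Functions Z_+ x R -> R are represented as nat -> R -> R. *)

Definition cont_in_x {R : realType} (f : nat -> R -> R) : Prop :=
  forall t : nat, continuous (f t).

Definition shiftf {R : realType} (f : nat -> R -> R) (h : nat) : nat -> R -> R :=
  fun t x => f (t + h)%N x.

(* g belongs to H^+(f): the closure of {f^h : h in Z_+} in C(Z_+ x R, R) with
   the topology of uniform convergence on {t : |t| <= L} x K, K compact;
   i.e. every basic neighbourhood of g meets the set of translates. *)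
Definition in_hull_plus {R : realType} (f g : nat -> R -> R) : Prop :=
  cont_in_x g /\
  forall (L : nat) (K : set R), compact K -> forall eps : R, 0 < eps ->
    exists h : nat, forall (t : nat) (x : R), (t <= L)%N -> K x ->
      `|shiftf f h t x - g t x| < eps.

Definition asympt_periodic {R : realType} (tau : nat) (f : nat -> R -> R) : Prop :=
  exists P Rm : nat -> R -> R,
    (forall t x, f t x = P t x + Rm t x) /\
    (forall t x, P (t + tau)%N x = P t x) /\
    (forall K : set R, compact K -> forall eps : R, 0 < eps ->
       exists T : nat, forall (t : nat) (x : R), (T <= t)%N -> K x ->
         `|Rm t x| < eps).

Fixpoint sol {R : realType} (f : nat -> R -> R) (u0 : R) (t : nat) : R :=
  match t with
  | 0%N => u0
  | t'.+1 => f t' (sol f u0 t')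
  end.

From HB Require Import structures.
From mathcomp Require Import all_boot all_order all_algebra.
From mathcomp Require Import all_classical all_reals all_analysis.
From mathcomp Require Import zify ring lra.
Import Order.TTheory GRing.Theory Num.Theory.
Import numFieldNormedType.Exports.
Local Open Scope classical_set_scope.
Local Open Scope ring_scope.

(* Fix a residue [j] modulo [tau] and sample the solution along
   [u m := x (m tau + j)].  Then [u (m + 1) = G m (u m)], where [G m] is the
   [tau]-step evolution of the equation from time [m tau + j].  The maps [G m]
   are nondecreasing (only the monotonicity of [f] itself, which lies in its own
   hull, is needed) and converge pointwise, to the [tau]-step evolution of the
   periodic part [P], because [f (t + m tau)] tends to [P t].  For a bounded
   sequence driven by such maps the increments [u (m + 1) - u m] tend to [0]:
   a jump of size [4 e] out of a band [[p, p + e]] occurring arbitrarily late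
   makes the level [p + 2 e] eventually invariant, so the orbit could not come
   back to the band, and finitely many bands cover the range of [u]. *)

Lemma cvg_nat_cauchy {R : realType} {a : nat -> R} {l e : R} :
  a @ \oo --> l -> 0 < e ->
  exists N, forall m n, (N <= m)%N -> (N <= n)%N -> `|a m - a n| < e.
Proof.
move=> a_cvg e_gt0.
have [N _ HN] := cvgr_dist_lt _ _ a_cvg (e / 2) ltac:(by rewrite divr_gt0).
exists N => m n hm hn.
have := HN m hm; rewrite distrC => near_m; have near_n := HN n hn.
apply: le_lt_trans (ler_distD l _ _) _; lra.
Qed.

Section MonotoneRecursion.
Context {R : realType} {u : nat -> R} {G : nat -> R -> R}.
Hypothesis u_rec : forall m, u m.+1 = G m (u m).
Hypothesis G_nondecr : forall m, {homo G m : v w / v <= w}.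
Hypothesis G_cvg : forall v, exists l : R, G^~ v @ \oo --> l.

Lemma jump_up_small_in_band (p eps : R) : 0 < eps ->
  exists N, forall m, (N <= m)%N -> p <= u m <= p + eps / 4 -> u m.+1 - u m < eps.
Proof.
move=> eps_gt0; set e := eps / 4.
have e_gt0 : 0 < e by rewrite divr_gt0.
have epsE : eps = 4 * e by rewrite /e mulrC divfK // pnatr_eq0.
clearbody e.
apply: contrapT => no_bound.
have big_jump N : exists m, [/\ (N <= m)%N, p <= u m <= p + e & eps <= u m.+1 - u m].
  apply: contrapT => HN; apply: no_bound; exists N => m hm band.
  by rewrite ltNge; apply/negP => jump; apply: HN; exists m.
have [l Gl] := G_cvg (p + e).
have [N1 HN1] := cvg_nat_cauchy Gl e_gt0.
have [n [hn /andP [un_ge un_le] jump_n]] := big_jump N1.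
have Gn_ge : p + 4 * e <= G n (p + e).
  by apply: le_trans _ (G_nondecr _ _ _ un_le); rewrite -u_rec; lra.
have invariant m : (N1 <= m)%N -> p + 2 * e <= G m (p + 2 * e).
  move=> hm; have := HN1 m n hm hn; rewrite ltr_norml => /andP [h _].
  have : G m (p + e) <= G m (p + 2 * e) by apply: G_nondecr; lra.
  lra.
have stays_above k : p + 2 * e <= u (n.+1 + k)%N.
  elim: k => [|k IH]; first by rewrite addn0; lra.
  rewrite addnS u_rec; apply: le_trans _ (invariant _ _) (G_nondecr _ _ _ IH); lia.
have [m [hm /andP [_ um_le] _]] := big_jump n.+1.
by have := stays_above (m - n.+1)%N; rewrite subnKC //; lra.
Qed.

Lemma jump_up_small (M eps : R) : (forall m, `|u m| <= M) -> 0 < eps ->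
  exists N, forall m, (N <= m)%N -> u m.+1 - u m < eps.
Proof.
move=> u_bnd eps_gt0.
have e_gt0 : 0 < eps / 4 by rewrite divr_gt0.
have bands (K : nat) : exists N, forall m, (N <= m)%N ->
    - M <= u m <= - M + K%:R * (eps / 4) -> u m.+1 - u m < eps.
  elim: K => [|K [N1 HN1]].
    have [N HN] := jump_up_small_in_band (- M) _ eps_gt0.
    by exists N => m hm; rewrite mul0r addr0 => band; apply: HN => //; lra.
  have [N2 HN2] := jump_up_small_in_band (- M + K%:R * (eps / 4)) _ eps_gt0.
  exists (maxn N1 N2) => m hm /andP [lo hi].
  have [low|high] := lerP (u m) (- M + K%:R * (eps / 4)).
    by apply: HN1; [lia | apply/andP].
  by apply: HN2; [lia | rewrite -natr1 mulrDl mul1r in hi; lra].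
have M_ge0 : 0 <= M by apply: le_trans (u_bnd 0%N).
have ratio_ge0 : 0 <= 2 * M / (eps / 4) by apply: divr_ge0; lra.
have [N HN] := bands (Num.Def.archi_bound (2 * M / (eps / 4))).
exists N => m hm; apply: HN => //.
have := archi_boundP ratio_ge0; rewrite ltr_pdivrMr //.
by have := u_bnd m; rewrite ler_norml; lra.
Qed.

End MonotoneRecursion.

Lemma jumps_cvg0 {R : realType} {u : nat -> R} {G : nat -> R -> R} {M : R} :
  (forall m, u m.+1 = G m (u m)) ->
  (forall m, {homo G m : v w / v <= w}) ->
  (forall v, exists l : R, G^~ v @ \oo --> l) ->
  (forall m, `|u m| <= M) ->
  (fun m => u m.+1 - u m) @ \oo --> 0.
Proof.
move=> u_rec G_nondecr G_cvg u_bnd; apply/cvgrPdist_lt => eps eps_gt0.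
have [N1 up] := jump_up_small u_rec G_nondecr G_cvg _ _ u_bnd eps_gt0.
pose Gr m v := - G m (- v).
have ur_rec m : - u m.+1 = Gr m (- u m) by rewrite /Gr u_rec opprK.
have Gr_nondecr m : {homo Gr m : v w / v <= w}.
  by move=> v w vw; rewrite lerN2; apply: G_nondecr; rewrite lerN2.
have Gr_cvg v : exists l : R, Gr^~ v @ \oo --> l.
  by have [l Gl] := G_cvg (- v); exists (- l); apply: cvgN.
have ur_bnd m : `|- u m| <= M by rewrite normrN.
have [N2 down] := jump_up_small ur_rec Gr_nondecr Gr_cvg _ _ ur_bnd eps_gt0.
exists (maxn N1 N2) => // m /= hm; rewrite sub0r normrN ltr_norml.
by have := up m ltac:(lia); have := down m ltac:(lia); lra.
Qed.

Fixpoint flow {R : realType} (f : nat -> R -> R) (s i : nat) (v : R) : R :=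
  if i is i'.+1 then f (s + i')%N (flow f s i' v) else v.

Lemma sol_addn (R : realType) (f : nat -> R -> R) (u0 : R) (s i : nat) :
  sol f u0 (s + i) = flow f s i (sol f u0 s).
Proof. by elim: i => [|i IH]; rewrite ?addn0 // addnS /= IH. Qed.

Lemma flow_nondecr {R : realType} {f : nat -> R -> R} :
  (forall t, {homo f t : v w / v <= w}) ->
  forall s i, {homo flow f s i : v w / v <= w}.
Proof. by move=> f_nondecr s; elim=> [|i IH] v w //= /IH /f_nondecr. Qed.

Section AsymptoticallyPeriodic.
Context {R : realType} {tau : nat} {f P Rm : nat -> R -> R}.
Hypothesis tau_gt0 : (0 < tau)%N.
Hypothesis f_cont : cont_in_x f.
Hypothesis f_split : forall t x, f t x = P t x + Rm t x.
Hypothesis P_periodic : forall t x, P (t + tau)%N x = P t x.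
Hypothesis Rm_vanish : forall K : set R, compact K -> forall eps : R, 0 < eps ->
  exists T : nat, forall (t : nat) (x : R), (T <= t)%N -> K x -> `|Rm t x| < eps.

Lemma P_periodicM m t x : P (t + m * tau)%N x = P t x.
Proof. by elim: m => [|m IH]; rewrite ?mul0n ?addn0 // mulSnr addnA P_periodic. Qed.

Lemma Rm_small_near (q e : R) : 0 < e ->
  exists T, forall t w, (T <= t)%N -> `|q - w| < 1 -> `|Rm t w| < e.
Proof.
move=> e_gt0; have [T HT] := Rm_vanish _ (@segment_compact R (q - 1) (q + 1)) _ e_gt0.
exists T => t w hT; rewrite ltr_norml => /andP [lo hi].
by apply: HT => //=; rewrite in_itv /=; apply/andP; split; lra.
Qed.

(* By periodicity [P s] is [P] at a late time [s + T tau], where it differs from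
   the continuous [f] only by the small remainder [Rm]. *)
Lemma P_continuous s : continuous (P s).
Proof.
move=> q; apply/cvgrPdist_lt => e e_gt0.
have e3_gt0 : 0 < e / 3 by rewrite divr_gt0.
have [T HT] := Rm_small_near q _ e3_gt0.
pose t := (s + T * tau)%N.
have tT : (T <= t)%N by rewrite /t; have := leq_pmulr T tau_gt0; lia.
near=> w.
rewrite -(P_periodicM T s q) -(P_periodicM T s w) -/t.
have -> : P t q - P t w = (f t q - f t w) - Rm t q + Rm t w by rewrite !f_split; ring.
have f_near : `|f t q - f t w| < e / 3.
  by near: w; apply: cvgr_dist_lt _ _ (f_cont t q) _ e3_gt0.
have Rm_q : `|Rm t q| < e / 3 by apply: HT; rewrite // subrr normr0.
have Rm_w : `|Rm t w| < e / 3.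
  by apply: HT => //; near: w;
    apply: cvgr_dist_lt _ _ (@cvg_id _ (nbhs q)) _ ltr01.
apply: le_lt_trans (ler_normD _ _) _.
apply: le_lt_trans (lerD (ler_normB (f t q - f t w) (Rm t q)) (lexx _)) _.
lra.
Unshelve. all: end_near.
Qed.

Lemma flow_shift_cvg j i v :
  (fun m => flow f (m * tau + j) i v) @ \oo --> flow P j i v.
Proof.
elim: i => [|i IH]; first exact: cvg_cst.
set q := flow P j i v.
have P_flow := cvg_comp _ _ IH (P_continuous (j + i) q).
apply/cvgrPdist_lt => e e_gt0.
have e2_gt0 : 0 < e / 2 by rewrite divr_gt0.
have [T HT] := Rm_small_near q _ e2_gt0.
near=> m.
have P_near : `|P (j + i)%N q - P (j + i)%N (flow f (m * tau + j) i v)| < e / 2.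
  by near: m; apply: cvgr_dist_lt _ _ P_flow _ e2_gt0.
have Rm_near : `|Rm (j + i + m * tau)%N (flow f (m * tau + j) i v)| < e / 2.
  apply: HT; last by near: m; apply: cvgr_dist_lt _ _ IH _ ltr01.
  have : (T <= m)%N by near: m; apply: nbhs_infty_ge.
  by have := leq_pmulr m tau_gt0; lia.
rewrite /= -/q (_ : m * tau + j + i = j + i + m * tau)%N; last by lia.
rewrite f_split P_periodicM opprD addrA.
by apply: le_lt_trans (ler_normB _ _) _; lra.
Unshelve. all: end_near.
Qed.

End AsymptoticallyPeriodic.

Lemma cvg_residues {R : realType} {tau : nat} {w : nat -> R} {l : R} :
  (0 < tau)%N -> (forall j, (j < tau)%N -> (fun m => w (m * tau + j)%N) @ \oo --> l) ->
  w @ \oo --> l.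
Proof.
move=> tau_gt0 w_res; apply/cvgrPdist_lt => e e_gt0.
have : \forall m \near \oo, forall j : 'I_tau, `|l - w (m * tau + j)%N| < e.
  by apply: filter_forall => j; apply: cvgr_dist_lt _ _ (w_res j (ltn_ord j)) _ e_gt0.
case=> N _ HN; exists (N * tau)%N => // t /= Nt.
rewrite (divn_eq t tau); apply: (HN _ _ (Ordinal (ltn_pmod t tau_gt0))).
by rewrite -leq_divRL in Nt.
Qed.

Lemma in_hull_plus_self {R : realType} {f : nat -> R -> R} :
  cont_in_x f -> in_hull_plus f f.
Proof.
move=> f_cont; split=> // L K _ eps eps_gt0.
by exists 0%N => t x _ _; rewrite /shiftf addn0 subrr normr0.
Qed.

Theorem mainTheorem18 (R : realType) (tau : nat) (f : nat -> R -> R) (u0 : R) :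
  cont_in_x f ->
  asympt_periodic tau f ->
  (forall g, in_hull_plus f g ->
     forall (t : nat) (v1 v2 : R), v1 < v2 -> g t v1 < g t v2) ->
  (exists M : R, forall t : nat, `|sol f u0 t| <= M) ->
  (fun t : nat => `|sol f u0 (t + tau)%N - sol f u0 t|) @ \oo --> (0 : R).
Proof.
move=> f_cont [P [Rm [f_split [P_periodic Rm_vanish]]]] hull_incr [M sol_bnd].
have [->|tau_gt0] := posnP tau.
  by under eq_fun do rewrite addn0 subrr normr0; exact: cvg_cst.
have f_nondecr t : {homo f t : v w / v <= w}.
  move=> v w; rewrite le_eqVlt => /predU1P [-> //|].
  by move/(hull_incr f (in_hull_plus_self f_cont))/ltW.
apply: (cvg_residues tau_gt0) => j _; rewrite -(@normr0 _ R); apply: cvg_norm.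
pose u m := sol f u0 (m * tau + j).
have u_rec m : u m.+1 = flow f (m * tau + j) tau (u m).
  by rewrite /u -sol_addn mulSnr addnAC.
have flow_cvg v : exists l : R, (fun m => flow f (m * tau + j) tau v) @ \oo --> l.
  by eexists; apply: flow_shift_cvg.
suff -> : (fun m => sol f u0 (m * tau + j + tau) - sol f u0 (m * tau + j)) =
          (fun m => u m.+1 - u m).
  exact: jumps_cvg0 u_rec (fun m => flow_nondecr f_nondecr _ _) flow_cvg
    (fun m => sol_bnd _).
by apply/funext => m; rewrite /u mulSnr addnAC.
Qed.
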